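(* Let $(A,+,\circ)$ be a finite left brace such that $(A,\circ)$ is a Dedekind group (every subgroup is normal), and let $(A,\cdot)$ be its decomposable associated cycle set. Suppose $A$ has a transitive cycle base, let $g$ be an element of a transitive cycle base and let $(A,\bullet)$ be the uniconnected associated cycle set $a\bullet b:=\lambda_a(g)^{-}\circ b$. Then $(A,\bullet)$ and $(A,\cdot)$ have finite multipermutation level and $mpl(A,\cdot)=mpl(A,\bullet)$. Moreover, for every $n\in\mathbb{N}$, the underlying sets of $\mathrm{Ret}^n(A,\cdot)$ and $\mathrm{Ret}^n(A,\bullet)$ coincide (as quotients of $A$).
   Context: A left brace is a set $A$ with two operations such that $(A,+)$ is an abelian group, $(A,\circ)$ is a group, and $a\circ(b+c)=a\circ b-a+a\circ c$. $\lambda_a(b):=-a+a\circ b$; $a\mapsto\lambda_a$ is a homomorphism $(A,\circ)\to\mathrm{Aut}(A,+)$. $a^{-}$ is the inverse in $(A,\circ)$. A transitive cycle base is a single $\lambda$-orbit generating $(A,+)$. A (non-degenerate) cycle set is a set $X$ with an operation such that each $\sigma_x:y\mapsto x\cdot y$ is bijective, $(x\cdot y)\cdot(x\cdot z)=(y\cdot x)\cdot(y\cdot z)$, and $x\mapsto x\cdot x$ is bijective. $\mathrm{Ret}(X)$ is the quotient of $X$ by $x\sim y\iff\sigma_x=\sigma_y$; $\mathrm{Ret}^0(X)=X$, $\mathrm{Ret}^i(X)=\mathrm{Ret}(\mathrm{Ret}^{i-1}(X))$; $mpl(X)$ is the least $n$ with $|\mathrm{Ret}^n(X)|=1$. The decomposable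 associated cycle set is $(A,\cdot)$ with $a\cdot b:=\lambda_a^{-1}(b)$. *)

From HB Require Import structures.
From mathcomp Require Import all_boot all_order all_algebra.
Set Implicit Arguments. Unset Strict Implicit. Unset Printing Implicit Defensive.
Import GRing.Theory.
Local Open Scope ring_scope.

Definition is_group (A : Type) (circ : A -> A -> A) (inv : A -> A) (one : A) :=
  [/\ (forall a b c, circ a (circ b c) = circ (circ a b) c),
      (forall a, circ one a = a), (forall a, circ a one = a),
      (forall a, circ (inv a) a = one) & (forall a, circ a (inv a) = one)].

Definition is_left_brace (A : zmodType) (circ : A -> A -> A) (inv : A -> A) (one : A) :=
  is_group circ inv one /\
  forall a b c : A, circ a (b + c) = circ a b - a + circ a c.

Definition lambda (A : zmodType) (circ : A -> A -> A) (a b : A) : A := - a + circ a b.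

Definition is_subgroup (A : finType) (circ : A -> A -> A) (inv : A -> A) (one : A)
  (S : {set A}) :=
  [/\ one \in S, (forall x y, x \in S -> y \in S -> circ x y \in S)
   & (forall x, x \in S -> inv x \in S)].

Definition is_dedekind (A : finType) (circ : A -> A -> A) (inv : A -> A) (one : A) :=
  forall S : {set A}, is_subgroup circ inv one S ->
    forall a s, s \in S -> circ (circ a s) (inv a) \in S.

Definition is_add_subgroup (A : finZmodType) (S : {set A}) :=
  [/\ (0 : A) \in S, (forall x y, x \in S -> y \in S -> x + y \in S)
   & (forall x, x \in S -> - x \in S)].

Definition add_generates (A : finZmodType) (X : {set A}) :=
  forall S : {set A}, is_add_subgroup S -> X \subset S -> S = setT.

Definition lambda_orbit (A : finZmodType) (circ : A -> A -> A) (g : A) : {set A} :=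
  [set lambda circ a g | a : A].

(* g belongs to a transitive cycle base: the lambda-orbit of g
   (which is the orbit containing g, as lambda_one = id) generates (A,+). *)
Definition in_transitive_cycle_base (A : finZmodType) (circ : A -> A -> A) (g : A) :=
  add_generates (lambda_orbit circ g).

(* Decomposable associated cycle set: a . b := lambda_a^{-1}(b) = lambda_{a^-}(b). *)
Definition dec_op (A : zmodType) (circ : A -> A -> A) (inv : A -> A) (a b : A) : A :=
  lambda circ (inv a) b.

Definition uni_op (A : zmodType) (circ : A -> A -> A) (inv : A -> A) (g a b : A) : A :=
  circ (inv (lambda circ a g)) b.

(* Iterated retraction, described as a quotient of X:
   ret_eq op n x y  <->  x and y have the same image in Ret^n(X, op).
   Ret^0 X = X; [x]_{n+1} = [y]_{n+1} iff sigma_[x]_n = sigma_[y]_n on Ret^n(X),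
   where the operation of Ret^n X is induced: [x]_n . [z]_n = [x . z]_n. *)
Fixpoint ret_eq (X : Type) (op : X -> X -> X) (n : nat) (x y : X) : Prop :=
  match n with
  | O => x = y
  | S m => forall z : X, ret_eq op m (op x z) (op y z)
  end.

(* |Ret^n(X)| = 1 (X nonempty) *)
Definition ret_trivial (X : Type) (op : X -> X -> X) (n : nat) : Prop :=
  forall x y : X, ret_eq op n x y.

Definition is_mpl (X : Type) (op : X -> X -> X) (n : nat) : Prop :=
  ret_trivial op n /\ forall m : nat, (m < n)%N -> ~ ret_trivial op m.

From mathcomp Require Import all_boot all_order all_algebra generic_quotient.
Set Implicit Arguments. Unset Strict Implicit. Unset Printing Implicit Defensive.
Import GRing.Theory.
Local Open Scope ring_scope.
Local Open Scope quotient_scope.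

(* Both cycle sets retract along the socle series of the brace: x and y have
   the same image in Ret^(n+1) iff lambda_x and lambda_y agree modulo the n-th
   socle.  For the decomposable cycle set this only uses lambda_(x^-) =
   lambda_x^-1.  For the uniconnected one, x and y are identified iff
   lambda_x(g) and lambda_y(g) agree modulo the n-th socle; the Dedekind
   property makes the stabiliser of the class of g normal, so it fixes the
   class of every lambda_d(g) and, as these generate (A,+), acts trivially.
   By finiteness the socle series becomes stationary at a congruence ~ such
   that lambda_x and lambda_y agree modulo ~ only if x ~ y; then a |->
   lambda_a(g) is injective, hence onto, on A/~, so g ~ 0 and ~ is total. *)

Lemma mono_equiv_onto (T : finType) (e : equiv_rel T) (f : T -> T) :
  {mono f : x y / e x y} -> forall y, exists x, e (f x) y.
Proof.
move=> f_mono y.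
pose Q := quot_type {eq_quot e}.
pose F (q : Q) : Q := \pi_Q (f (repr q)).
have F_inj : injective F.
  by move=> q1 q2 /eqmodP; rewrite f_mono => /eqmodP; rewrite !reprK.
have [G _ GK] := injF_bij F_inj.
by exists (repr (G (\pi_Q y))); apply/eqmodP; rewrite -[RHS]GK.
Qed.

Lemma subset_chain_stationary (T : finType) (P : nat -> {set T}) :
  (forall n, P n \subset P n.+1) -> exists n, P n.+1 \subset P n.
Proof.
move=> P_incr.
suff /(_ #|T|.+1) [//|] : forall k, (exists n, P n.+1 \subset P n) \/ (k <= #|P k|)%N.
  by move/leq_trans/(_ (max_card _)); rewrite ltnn.
elim=> [|k [stable | le_k]]; [by right | by left | ].
have [stable_k | growing_k] := boolP (P k.+1 \subset P k); first by left; exists k.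
by right; apply: leq_ltn_trans le_k (proper_card _); rewrite properE P_incr.
Qed.

Lemma cycle_base_ind (A : finZmodType) (circ : A -> A -> A) (g : A) (P : pred A) :
  in_transitive_cycle_base circ g -> P 0 ->
  (forall x y, P x -> P y -> P (x + y)) -> (forall x, P x -> P (- x)) ->
  (forall a, P (lambda circ a g)) -> forall z, P z.
Proof.
move=> base P0 PD PN P_orbit z.
suff /setP/(_ z) : [set x | P x] = setT by rewrite !inE.
apply: base; first by split=> [|x y|x]; rewrite !inE; [exact: P0|exact: PD|exact: PN].
by apply/subsetP => _ /imsetP[a _ ->]; rewrite inE.
Qed.

Existing Class is_left_brace.

Section BraceAlgebra.
Context (A : zmodType) (circ : A -> A -> A) (inv : A -> A) (one : A).
Context {brace : is_left_brace circ inv one}.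
Local Notation "a *o b" := (circ a b) (at level 40, left associativity).
Local Notation lam := (lambda circ).

Lemma circA a b c : a *o (b *o c) = a *o b *o c. Proof. by case: brace => -[]. Qed.
Lemma circ1l a : one *o a = a. Proof. by case: brace => -[]. Qed.
Lemma circ1r a : a *o one = a. Proof. by case: brace => -[]. Qed.
Lemma circVl a : inv a *o a = one. Proof. by case: brace => -[]. Qed.
Lemma circVr a : a *o inv a = one. Proof. by case: brace => -[]. Qed.
Lemma circDr a b c : a *o (b + c) = a *o b - a + a *o c. Proof. by case: brace. Qed.

Lemma circ0r a : a *o 0 = a.
Proof.
have /eqP := circDr a 0 0; rewrite addr0 -addrA -{1}[a *o 0]addr0 (inj_eq (addrI _)).
by rewrite eq_sym addrC subr_eq0 => /eqP.
Qed.

Lemma one_eq0 : one = 0. Proof. by rewrite -(circ0r one) circ1l. Qed.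

Lemma circE a b : a *o b = a + lam a b. Proof. by rewrite /lambda addNKr. Qed.

Lemma lambdaD a : {morph lam a : x y / x + y}.
Proof. by move=> x y; rewrite /lambda circDr !addrA. Qed.
Lemma lambda0 a : lam a 0 = 0. Proof. by rewrite /lambda circ0r addNr. Qed.
Lemma lambdaN a x : lam a (- x) = - lam a x.
Proof. by apply/eqP; rewrite -addr_eq0 -lambdaD addNr lambda0. Qed.
Lemma lambdaB a x y : lam a (x - y) = lam a x - lam a y.
Proof. by rewrite lambdaD lambdaN. Qed.
Lemma lambda_one x : lam one x = x.
Proof. by rewrite /lambda circ1l one_eq0 oppr0 add0r. Qed.
Lemma lambdaM a b x : lam (a *o b) x = lam a (lam b x).
Proof. by rewrite {1}/lambda -circA [b *o x]circE circDr !addrA addNr add0r. Qed.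
Lemma lambdaK a x : lam (inv a) (lam a x) = x.
Proof. by rewrite -lambdaM circVl lambda_one. Qed.
Lemma lambdaKV a x : lam a (lam (inv a) x) = x.
Proof. by rewrite -lambdaM circVr lambda_one. Qed.

Lemma inv_uniq a b : a *o b = one -> inv a = b.
Proof. by move=> ab; rewrite -[RHS]circ1l -(circVl a) -circA ab circ1r. Qed.
Lemma invoK a : inv (inv a) = a. Proof. by apply: inv_uniq; rewrite circVl. Qed.
Lemma invoM a b : inv (a *o b) = inv b *o inv a.
Proof. by apply: inv_uniq; rewrite circA -[a *o b *o inv b]circA circVr circ1r circVr. Qed.

Record brace_congruence (R : rel A) : Prop := BraceCongruence {
  congr_refl : reflexive R;
  congr_sym : symmetric R;
  congr_trans : transitive R;
  congr_addr : forall x y z, R x y -> R (x + z) (y + z);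
  congr_lambda : forall a x y, R x y -> R (lam a x) (lam a y);
  congr_circr : forall x y z, R x y -> R (x *o z) (y *o z) }.

Lemma eq_brace_congruence : brace_congruence eq_op.
Proof. by split=> [x|x y|y x z|x y z|a x y|x y z] // /eqP-> // /eqP->. Qed.

Section Congruence.
Variable R : rel A.
Hypothesis congR : brace_congruence R.

Lemma congrD x y u v : R x y -> R u v -> R (x + u) (y + v).
Proof.
move=> xy uv; apply: (congr_trans congR) (congr_addr congR u xy) _.
by rewrite ![y + _]addrC; apply: (congr_addr congR).
Qed.

Lemma congrN x y : R x y -> R (- x) (- y).
Proof.
move=> /(congr_addr congR (- x - y)).
by rewrite addNKr [y + _]addrC subrK (congr_sym congR).
Qed.

Lemma congr_circl z x y : R x y -> R (z *o x) (z *o y).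
Proof.
by rewrite !circE => /(congr_lambda congR z); apply: congrD (congr_refl congR z).
Qed.

Lemma congr_lambdal z x y : R x y -> R (lam x z) (lam y z).
Proof. by move=> xy; apply: congrD (congrN xy) (congr_circr congR z xy). Qed.

Lemma congr_inv x y : R x y -> R (inv x) (inv y).
Proof.
move=> /(congr_circl (inv x)) /(congr_circr congR (inv y)).
by rewrite circVl circ1l -circA circVr circ1r (congr_sym congR).
Qed.

Lemma congr_lambda_eq a x y : R (lam a x) (lam a y) = R x y.
Proof.
apply/idP/idP => [/(congr_lambda congR (inv a))|/(congr_lambda congR a) //].
by rewrite !lambdaK.
Qed.

Lemma congr_inv_eq x y : R (inv x) (inv y) = R x y.
Proof. by apply/idP/idP => [/congr_inv|/congr_inv //]; rewrite !invoK. Qed.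

End Congruence.
End BraceAlgebra.

Section Socle.
Context (A : finZmodType) (circ : A -> A -> A) (inv : A -> A) (one : A).
Context {brace : is_left_brace circ inv one}.
Local Notation "a *o b" := (circ a b) (at level 40, left associativity).
Local Notation lam := (lambda circ).

Definition same_lambda (R : rel A) : rel A :=
  fun x y => [forall z, R (lam x z) (lam y z)].

Section SameLambda.
Variable R : rel A.
Hypothesis congR : brace_congruence circ R.

Lemma congr_same_lambda x y : R x y -> same_lambda R x y.
Proof. by move=> xy; apply/forallP => z; apply: (congr_lambdal congR). Qed.

Lemma same_lambda_trans : transitive (same_lambda R).
Proof.
move=> y x z /forallP xy /forallP yz; apply/forallP => w.
exact: (congr_trans congR) (xy w) (yz w).
Qed.

Lemma same_lambda_invl x y : same_lambda R x y = same_lambda R (inv y *o x) one.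
Proof.
apply/forallP/forallP => xy z.
  by rewrite lambda_one lambdaM -(congr_lambda_eq congR y) lambdaKV; apply: xy.
by have := xy z; rewrite lambda_one lambdaM -(congr_lambda_eq congR y) lambdaKV.
Qed.

Lemma same_lambda1_conj a c :
  same_lambda R c one -> same_lambda R (a *o c *o inv a) one.
Proof.
move=> /forallP c1; apply/forallP => z; rewrite !lambdaM lambda_one.
by have := congr_lambda congR a (c1 (lam (inv a) z)); rewrite lambda_one lambdaKV.
Qed.

Lemma same_lambda1_lambda a c : same_lambda R c one -> same_lambda R (lam a c) one.
Proof.
move=> c1; set d := a *o c *o inv a.
have d1 : same_lambda R d one by apply: same_lambda1_conj.
have -> : lam a c = - a + (d + lam d a).
  by rewrite -circE /d -!circA circVl circ1r.
have /forallP/(_ a) := d1; rewrite lambda_one => da.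
apply: same_lambda_trans d1; apply: congr_same_lambda.
have := congrD congR (congr_refl congR (- a)) (congrD congR (congr_refl congR d) da).
by rewrite [d + a]addrC addKr.
Qed.

Lemma same_lambda_subr x y : same_lambda R x y = same_lambda R (x - y) one.
Proof.
have -> : x - y = lam y (inv y *o x) by rewrite /lambda circA circVr circ1l addrC.
rewrite same_lambda_invl; apply/idP/idP => [/(same_lambda1_lambda y) //|].
by move=> /(same_lambda1_lambda (inv y)); rewrite lambdaK.
Qed.

Lemma same_lambda_congruence : brace_congruence circ (same_lambda R).
Proof.
split.
- by move=> x; apply/forallP => z; apply: (congr_refl congR).
- by move=> x y; apply/forallP/forallP => xy z; rewrite (congr_sym congR); apply: xy.
- exact: same_lambda_trans.
- move=> x y z; rewrite (same_lambda_subr x) (same_lambda_subr (x + z)).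
  by rewrite opprD addrACA subrr addr0.
- move=> a x y; rewrite (same_lambda_subr x) (same_lambda_subr (lam a x)) -lambdaB.
  exact: same_lambda1_lambda.
- move=> x y z; rewrite (same_lambda_invl x) (same_lambda_invl (x *o z)).
  move=> /(same_lambda1_conj (inv z)).
  by rewrite invoK invoM !circA.
Qed.

Lemma same_lambda_inv x y : same_lambda R (inv x) (inv y) = same_lambda R x y.
Proof.
apply/forallP/forallP => xy z.
  have := xy (lam x z); rewrite lambdaK -(congr_lambda_eq congR y) lambdaKV.
  by rewrite (congr_sym congR).
have := xy (lam (inv x) z); rewrite lambdaKV -(congr_lambda_eq congR (inv y)) lambdaK.
by rewrite (congr_sym congR).
Qed.

End SameLambda.

(* soc_rel n x y holds iff x - y lies in the n-th socle Soc_n(A) of the brace. *)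
Definition soc_rel n : rel A := iter n same_lambda eq_op.

Definition soc_total : pred nat := fun n => [forall x, forall y, soc_rel n x y].

Lemma soc_rel_congruence n : brace_congruence circ (soc_rel n).
Proof.
by elim: n => [|n IHn]; [exact: eq_brace_congruence | exact: same_lambda_congruence].
Qed.

Lemma ret_eq_soc_rel (op : A -> A -> A) :
  (forall n x y, [forall z, soc_rel n (op x z) (op y z)] = soc_rel n.+1 x y) ->
  forall n x y, ret_eq op n x y <-> soc_rel n x y.
Proof.
move=> opS; elim=> [|n IHn] x y; first exact: (rwP eqP).
rewrite -opS; split=> [xy|/forallP xy z]; last exact/IHn.
by apply/forallP => z; apply/IHn.
Qed.

Lemma ret_eq_dec n x y : ret_eq (dec_op circ inv) n x y <-> soc_rel n x y.
Proof.
apply: ret_eq_soc_rel => {}n {}x {}y.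
exact: (same_lambda_inv (soc_rel_congruence n) x y).
Qed.

Lemma soc_rel_stationary :
  exists n, forall x y, same_lambda (soc_rel n) x y -> soc_rel n x y.
Proof.
pose P n := [set p : A * A | soc_rel n p.1 p.2].
have [|n stable] := @subset_chain_stationary _ P.
  move=> n; apply/subsetP => p; rewrite !inE.
  exact: (congr_same_lambda (soc_rel_congruence n)).
by exists n => x y xy; have /subsetP/(_ (x, y)) := stable; rewrite !inE; apply.
Qed.

Lemma is_mpl_soc (op : A -> A -> A) n :
  (forall m x y, ret_eq op m x y <-> soc_rel m x y) ->
  soc_total n -> (forall m, soc_total m -> n <= m)%N -> is_mpl op n.
Proof.
move=> ret_soc.
have trivialE m : ret_trivial op m <-> soc_total m.
  split=> [triv | /forallP total x y].
    by apply/forallP => x; apply/forallP => y; apply/ret_soc.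
  by apply/ret_soc; have /forallP := total x.
move=> /trivialE n_triv n_min; split=> // m lt_mn /trivialE /n_min.
by rewrite leqNgt lt_mn.
Qed.

Section CycleBase.
Variable g : A.
Hypothesis dedekind : is_dedekind circ inv one.
Hypothesis base : in_transitive_cycle_base circ g.

Section Congruence.
Variable R : rel A.
Hypothesis congR : brace_congruence circ R.

Lemma same_lambda1_of_fix c : R (lam c g) g -> same_lambda R c one.
Proof.
move=> cg.
pose S := [set d | R (lam d g) g].
have S_subgroup : is_subgroup circ inv one S.
  split=> [|x y|x]; rewrite !inE ?lambda_one ?(congr_refl congR) //.
    by rewrite lambdaM => xg yg; apply: (congr_trans congR) (congr_lambda congR x yg) xg.
  by move=> xg; rewrite (congr_sym congR) -(congr_lambda_eq congR x) lambdaKV.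
have orbit_fixed d : R (lam c (lam d g)) (lam d g).
  have cS : c \in S by rewrite inE.
  have := dedekind S_subgroup (inv d) cS; rewrite inE invoK.
  by rewrite -(congr_lambda_eq congR d) -!lambdaM !circA circVr circ1l lambdaM.
apply/forallP => z; rewrite lambda_one.
apply: (cycle_base_ind base (P := fun z => R (lam c z) z)) => [|x y cx cy|x cx|d].
- by rewrite lambda0 (congr_refl congR).
- by rewrite lambdaD; apply: (congrD congR cx cy).
- by rewrite lambdaN; apply: (congrN congR cx).
- exact: orbit_fixed.
Qed.

Lemma uni_same_lambda x y :
  [forall z, R (uni_op circ inv g x z) (uni_op circ inv g y z)] = same_lambda R x y.
Proof.
transitivity (R (lam x g) (lam y g)).
  apply/forallP/idP => [/(_ one) | xy z]; rewrite /uni_op.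
    by rewrite !circ1r (congr_inv_eq congR).
  by apply: (congr_circr congR); rewrite (congr_inv_eq congR).
rewrite (same_lambda_invl congR) -(congr_lambda_eq congR (inv y)) lambdaK -lambdaM.
apply/idP/idP => [/same_lambda1_of_fix // | /forallP/(_ g)].
by rewrite lambda_one.
Qed.

Lemma congruence_total :
  (forall x y, same_lambda R x y -> R x y) -> forall x y, R x y.
Proof.
move=> stable.
have g_mono : {mono lam^~ g : a b / R a b}.
  move=> a b; apply/idP/idP; last exact: (congr_lambdal congR).
  rewrite -(congr_lambda_eq congR (inv b)) lambdaK -lambdaM => /same_lambda1_of_fix.
  by rewrite -(same_lambda_invl congR); apply: stable.
pose e := EquivRel R (congr_refl congR) (congr_sym congR) (congr_trans congR).
have [a ag0] := mono_equiv_onto (e := e) g_mono 0.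
have g0 : R g 0 by have := congr_lambda congR (inv a) ag0; rewrite lambdaK lambda0.
have to0 : forall z, R z 0.
  apply: (cycle_base_ind base (P := fun z => R z 0)) => [|x y x0 y0|x x0|d].
  - exact: (congr_refl congR).
  - by rewrite -(addr0 0); apply: (congrD congR x0 y0).
  - by rewrite -oppr0; apply: (congrN congR x0).
  - by rewrite -(lambda0 d); apply: (congr_lambda congR d g0).
by move=> x y; apply: (congr_trans congR) (to0 x) _; rewrite (congr_sym congR).
Qed.

End Congruence.

Lemma ret_eq_uni n x y : ret_eq (uni_op circ inv g) n x y <-> soc_rel n x y.
Proof.
apply: ret_eq_soc_rel => {}n {}x {}y.
exact: (uni_same_lambda (soc_rel_congruence n) x y).
Qed.

Lemma soc_rel_total : exists n, soc_total n.
Proof.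
have [n stable] := soc_rel_stationary.
exists n; apply/forallP => x; apply/forallP => y.
exact: congruence_total (soc_rel_congruence n) stable x y.
Qed.

End CycleBase.
End Socle.

Theorem mainTheorem6 (A : finZmodType) (circ : A -> A -> A) (inv : A -> A) (one : A)
  (g : A) :
  is_left_brace circ inv one ->
  is_dedekind circ inv one ->
  in_transitive_cycle_base circ g ->
  (exists n : nat, is_mpl (dec_op circ inv) n /\ is_mpl (uni_op circ inv g) n) /\
  (forall (n : nat) (x y : A),
     ret_eq (dec_op circ inv) n x y <-> ret_eq (uni_op circ inv g) n x y).
Proof.
move=> brace dedekind base.
have [n n_total n_min] := ex_minnP (soc_rel_total dedekind base).
split=> [|m x y]; last first.
  exact: iff_trans (ret_eq_dec m x y) (iff_sym (ret_eq_uni dedekind base m x y)).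
exists n; split; apply: is_mpl_soc n_total n_min.
  exact: ret_eq_dec.
exact: ret_eq_uni dedekind base.
Qed.
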